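(* There is a normal infinite word $x=a_1a_2a_3\cdots$ over the alphabet $\{0,1\}$ such that $x=\mathrm{even}(x)$, i.e. $a_{2n}=a_n$ for every $n\ge1$.
   Context: For $x=a_1a_2a_3\cdots$, $\mathrm{even}(x)=a_2a_4a_6\cdots$. For words $w,u$, $|w|^{al}_u=|\{i: w[i..i+|u|-1]=u,\ i\equiv1\bmod|u|\}|$ (positions start at 1). An infinite word $x$ over $A$ is normal if for every $\ell\ge1$ and every $u\in A^\ell$, $\lim_{n\to\infty}|x[1..n]|^{al}_u/(n/\ell)=|A|^{-\ell}$. *)

From Stdlib Require Import Reals Arith List Bool.
Import ListNotations.
Open Scope R_scope.

(* An infinite word over {0,1} is x : nat -> bool, 0-indexed:
   x k is the letter a_{k+1} (the paper indexes positions from 1). *)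
Definition word := nat -> bool.

(* even(x) = a_2 a_4 a_6 ...; its k-th letter (0-indexed) is a_{2(k+1)} = x (2k+1). *)
Definition even_word (x : word) : word := fun k => x (2 * k + 1)%nat.

(* |x[1..n]|^{al}_u : number of positions i in 1..n with i = 1 mod |u|
   and x[i..i+|u|-1] = u, the occurrence lying inside x[1..n].
   Writing i = k*|u| + 1 (0-indexed start k*|u|), these are k < n / |u|. *)
Definition aligned_occ (x : word) (u : list bool) (n : nat) : nat :=
  let l := length u in
  length (filter
    (fun k => forallb (fun j => Bool.eqb (x (k * l + j)%nat) (nth j u false))
                      (seq 0 l))
    (seq 0 (n / l))).

Definition normal (x : word) : Prop :=
  forall (l : nat) (u : list bool), (1 <= l)%nat -> length u = l ->
    Un_cv (fun n => INR (aligned_occ x u n) / (INR n / INR l)) (/ 2 ^ l).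

From Stdlib Require Import Reals Arith List Bool Lia Lra.
Open Scope nat_scope.

(* A letter with a_(2n) = a_n may only depend on the odd part o of its position n = 2^v o,
   so we let it be a bit of o itself: with j = log2 log2 log2 o, the bit of o at position
   window_start j + (j + 1) (o mod 2^j).
   Fix a word u of length l and a level 2^m <= n < 2^(m+1), and let J = log2 log2 m.  Apart
   from a proportion about l 2^-J of aligned blocks, which contain a multiple of 2^J, every
   position n + i = 2^v o of a block has v < J, and the l letters of the block are pairwise
   distinct bits of n lying in a window [base, base + width) above the bits that select them.
   Shifting the block by multiples of 2^base (compatibly with the alignment) keeps these
   positions while the window runs over all 2^width values, so exactly a 2^-l fraction of
   these blocks spell u.  The errors, small against 2^m on each level, add up to o(N) over
   the first N blocks. *)

(** * Powers of two and the 2-adic valuation *)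

Lemma pow2_pos (k : nat) : 0 < 2 ^ k.
Proof. apply Nat.neq_0_lt_0, Nat.pow_nonzero. lia. Qed.

Lemma pow2_split (a b : nat) : a <= b -> 2 ^ b = 2 ^ a * 2 ^ (b - a).
Proof. intros. rewrite <- Nat.pow_add_r. f_equal. lia. Qed.

Lemma mod_pow2_mul (a b x : nat) : a <= b -> (2 ^ b * x) mod 2 ^ a = 0.
Proof.
  intros. rewrite (pow2_split a b), <- Nat.mul_assoc, Nat.mul_comm by assumption.
  apply Nat.Div0.mod_mul.
Qed.

Lemma pow2_le_mono (a b : nat) : a <= b -> 2 ^ a <= 2 ^ b.
Proof. intros. apply Nat.pow_le_mono_r; lia. Qed.

Lemma lt_pow2 (n : nat) : n < 2 ^ n.
Proof. induction n; simpl; lia. Qed.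

Lemma odd_pos (o : nat) : Nat.odd o = true -> 0 < o.
Proof. destruct o; [discriminate | lia]. Qed.

Fixpoint val2_iter (fuel n : nat) : nat :=
  match fuel with
  | 0 => 0
  | S fuel => if (0 <? n) && Nat.even n then S (val2_iter fuel (Nat.div2 n)) else 0
  end.

(* [val2_iter n n] is the 2-adic valuation of [n]: the fuel [n] suffices. *)
Definition val2 (n : nat) : nat := val2_iter n n.

Definition odd_part (n : nat) : nat := n / 2 ^ val2 n.

Lemma val2_iter_spec (fuel n : nat) : 0 < n -> n <= fuel ->
  exists o, Nat.odd o = true /\ n = 2 ^ val2_iter fuel n * o.
Proof.
  revert n; induction fuel as [|fuel IH]; intros n Hn Hf; [lia|].
  simpl. destruct (Nat.ltb_spec 0 n) as [_|]; [|lia].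
  destruct (Nat.even n) eqn:He; simpl.
  - assert (Hd : n = 2 * Nat.div2 n).
    { rewrite (Nat.div2_odd n) at 1. rewrite <- Nat.negb_even, He. simpl. lia. }
    destruct (IH (Nat.div2 n)) as [o [Ho E]]; try lia.
    exists o. split; [exact Ho|]. simpl. lia.
  - exists n. split; [rewrite <- Nat.negb_even, He; reflexivity | simpl; lia].
Qed.

Lemma odd_part_spec (n : nat) : 0 < n ->
  Nat.odd (odd_part n) = true /\ n = 2 ^ val2 n * odd_part n.
Proof.
  intros Hn. destruct (val2_iter_spec n n Hn (le_n n)) as [o [Ho E]].
  fold (val2 n) in E.
  assert (Hdiv : odd_part n = o).
  { unfold odd_part. rewrite E at 1. rewrite Nat.mul_comm, Nat.div_mul; [reflexivity|].
    apply Nat.pow_nonzero. lia. }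
  rewrite Hdiv. split; assumption.
Qed.

Lemma pow2_odd_inj (a b o o' : nat) : Nat.odd o = true -> Nat.odd o' = true ->
  2 ^ a * o = 2 ^ b * o' -> a = b /\ o = o'.
Proof.
  revert b; induction a as [|a IH]; intros [|b] Ho Ho' E;
    rewrite ?Nat.pow_0_r, ?Nat.pow_succ_r' in E.
  - simpl in E. lia.
  - replace o with (2 * (2 ^ b * o')) in Ho by lia. rewrite Nat.odd_even in Ho. discriminate.
  - replace o' with (2 * (2 ^ a * o)) in Ho' by lia. rewrite Nat.odd_even in Ho'. discriminate.
  - destruct (IH b Ho Ho') as [-> ->]; lia.
Qed.

Lemma val2_odd_part_pow2_mul (v o : nat) : Nat.odd o = true ->
  val2 (2 ^ v * o) = v /\ odd_part (2 ^ v * o) = o.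
Proof.
  intros Ho. pose proof (pow2_pos v). pose proof (odd_pos o Ho).
  destruct (odd_part_spec (2 ^ v * o)) as [Ho' E]; [nia|].
  destruct (pow2_odd_inj _ _ _ _ Ho' Ho (eq_sym E)). split; assumption.
Qed.

Lemma odd_part_double (n : nat) : 0 < n -> odd_part (2 * n) = odd_part n.
Proof.
  intros Hn. destruct (odd_part_spec n Hn) as [Ho E].
  rewrite E at 1. rewrite Nat.mul_assoc, <- Nat.pow_succ_r'.
  apply val2_odd_part_pow2_mul, Ho.
Qed.

(** * Counting in ranges *)

Definition count_range (p : nat -> bool) (a n : nat) : nat := length (filter p (seq a n)).

Lemma count_range_add (p : nat -> bool) (a n n' : nat) :
  count_range p a (n + n') = count_range p a n + count_range p (a + n) n'.
Proof. unfold count_range. rewrite seq_app, filter_app, length_app. reflexivity. Qed.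

Lemma count_range_S (p : nat -> bool) (a n : nat) :
  count_range p a (S n) = count_range p a n + (if p (a + n) then 1 else 0).
Proof.
  rewrite <- Nat.add_1_r, count_range_add. unfold count_range at 2. simpl.
  destruct (p (a + n)); reflexivity.
Qed.

Lemma count_range_le (p : nat -> bool) (a n : nat) : count_range p a n <= n.
Proof. unfold count_range. rewrite <- (length_seq n a) at 2. apply filter_length_le. Qed.

Lemma count_range_negb (p : nat -> bool) (a n : nat) :
  count_range p a n + count_range (fun i => negb (p i)) a n = n.
Proof. unfold count_range. rewrite filter_length. apply length_seq. Qed.

Lemma count_range_ext (p q : nat -> bool) (a n : nat) :
  (forall i, a <= i < a + n -> p i = q i) -> count_range p a n = count_range q a n.
Proof.
  intros H. induction n as [|n IH]; [reflexivity|].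
  rewrite !count_range_S, IH by (intros; apply H; lia). rewrite H by lia. reflexivity.
Qed.

Lemma count_range_mono (p q : nat -> bool) (a n : nat) :
  (forall i, a <= i < a + n -> p i = true -> q i = true) ->
  count_range p a n <= count_range q a n.
Proof.
  intros H. induction n as [|n IH]; [reflexivity|].
  rewrite !count_range_S.
  specialize (IH (fun i Hi => H i ltac:(lia))). specialize (H (a + n) ltac:(lia)).
  destruct (p (a + n)), (q (a + n)); try lia.
Qed.

Lemma count_range_const (b : bool) (a n : nat) :
  count_range (fun _ => b) a n = if b then n else 0.
Proof.
  induction n as [|n IH]; [destruct b; reflexivity|].
  rewrite count_range_S, IH. destruct b; lia.
Qed.

Lemma count_range_orb (p q : nat -> bool) (a n : nat) :
  count_range (fun i => p i || q i) a n <= count_range p a n + count_range q a n.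
Proof.
  induction n as [|n IH]; [reflexivity|]. rewrite !count_range_S.
  destruct (p (a + n)), (q (a + n)); simpl; lia.
Qed.

Lemma count_range_split (p q : nat -> bool) (a n : nat) :
  count_range q a n =
  count_range (fun i => p i && q i) a n + count_range (fun i => negb (p i) && q i) a n.
Proof.
  induction n as [|n IH]; [reflexivity|]. rewrite !count_range_S, IH.
  destruct (p (a + n)), (q (a + n)); simpl; lia.
Qed.

Lemma count_range_shift (p : nat -> bool) (a n : nat) :
  count_range p a n = count_range (fun i => p (a + i)) 0 n.
Proof. induction n as [|n IH]; [reflexivity|]. rewrite !count_range_S, IH. reflexivity. Qed.

Lemma count_range_inj (phi : nat -> nat) (p : nat -> bool) (n n' : nat) :
  (forall i j, i < n -> j < n -> phi i = phi j -> i = j) ->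
  (forall i, i < n -> phi i < n') ->
  count_range (fun i => p (phi i)) 0 n <= count_range p 0 n'.
Proof.
  intros Hinj Hb. unfold count_range. rewrite <- (length_map phi).
  apply NoDup_incl_length.
  - apply NoDup_map_NoDup_ForallPairs; [|apply NoDup_filter, seq_NoDup].
    intros i j Hi Hj. apply filter_In in Hi as [Hi _], Hj as [Hj _].
    apply in_seq in Hi, Hj. apply Hinj; lia.
  - intros y Hy. apply in_map_iff in Hy as [i [<- Hi]].
    apply filter_In in Hi as [Hi Hp]. apply in_seq in Hi.
    apply filter_In. split; [apply in_seq; specialize (Hb i); lia | exact Hp].
Qed.

Lemma count_range_perm (phi : nat -> nat) (p : nat -> bool) (n : nat) :
  (forall i j, i < n -> j < n -> phi i = phi j -> i = j) ->
  (forall i, i < n -> phi i < n) ->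
  count_range (fun i => p (phi i)) 0 n = count_range p 0 n.
Proof.
  intros Hinj Hb.
  pose proof (count_range_inj phi p n n Hinj Hb).
  pose proof (count_range_inj phi (fun y => negb (p y)) n n Hinj Hb).
  pose proof (count_range_negb (fun i => p (phi i)) 0 n).
  pose proof (count_range_negb p 0 n). simpl in *. lia.
Qed.

Fixpoint sum_upto (f : nat -> nat) (n : nat) : nat :=
  match n with 0 => 0 | S n => sum_upto f n + f n end.

Lemma sum_upto_ext (f h : nat -> nat) (n : nat) :
  (forall i, i < n -> f i = h i) -> sum_upto f n = sum_upto h n.
Proof. intros H. induction n as [|n IH]; simpl; [reflexivity|]. rewrite IH, H; auto. Qed.

Lemma sum_upto_add (f h : nat -> nat) (n : nat) :
  sum_upto (fun i => f i + h i) n = sum_upto f n + sum_upto h n.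
Proof. induction n as [|n IH]; simpl; [reflexivity|]. rewrite IH. lia. Qed.

Lemma sum_upto_const (c n : nat) : sum_upto (fun _ => c) n = n * c.
Proof. induction n as [|n IH]; simpl; [reflexivity|]. rewrite IH. lia. Qed.

Lemma sum_upto_mul (c : nat) (f : nat -> nat) (n : nat) :
  c * sum_upto f n = sum_upto (fun i => c * f i) n.
Proof. induction n as [|n IH]; simpl; [lia|]. rewrite <- IH. lia. Qed.

Lemma sum_upto_swap (f : nat -> nat -> nat) (n n' : nat) :
  sum_upto (fun i => sum_upto (f i) n') n = sum_upto (fun j => sum_upto (fun i => f i j) n) n'.
Proof.
  induction n as [|n IH]; simpl.
  - rewrite sum_upto_const. lia.
  - rewrite IH, <- sum_upto_add. reflexivity.
Qed.

Lemma count_range_sum (p : nat -> bool) (a n : nat) :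
  count_range p a n = sum_upto (fun i => if p (a + i) then 1 else 0) n.
Proof. induction n as [|n IH]; [reflexivity|]. rewrite count_range_S, IH. reflexivity. Qed.

Lemma count_range_columns (p : nat -> bool) (a T M : nat) :
  count_range p a (M * T) = sum_upto (fun t => count_range (fun q => p (a + t + q * T)) 0 M) T.
Proof.
  assert (E : count_range p a (M * T) =
    sum_upto (fun q => sum_upto (fun t => if p (a + t + q * T) then 1 else 0) T) M).
  { induction M as [|M IH]; [reflexivity|].
    replace (S M * T) with (M * T + T) by lia. rewrite count_range_add, IH. simpl.
    f_equal. rewrite count_range_sum. apply sum_upto_ext. intros i _.
    replace (a + M * T + i) with (a + i + M * T) by lia. reflexivity. }
  rewrite E, sum_upto_swap. apply sum_upto_ext. intros t _. rewrite count_range_sum. reflexivity.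
Qed.

Lemma count_range_existsb (p : nat -> nat -> bool) (a n L B : nat) :
  (forall i, i < L -> count_range (p i) a n <= B) ->
  count_range (fun k => existsb (fun i => p i k) (seq 0 L)) a n <= L * B.
Proof.
  intros HB. induction L as [|L IH].
  - simpl. rewrite count_range_const. lia.
  - assert (Hsplit : count_range (fun k => existsb (fun i => p i k) (seq 0 (S L))) a n <=
        count_range (fun k => existsb (fun i => p i k) (seq 0 L)) a n + count_range (p L) a n).
    { eapply Nat.le_trans; [|apply count_range_orb]. apply count_range_mono.
      intros k _ Hk. rewrite seq_S, existsb_app in Hk. simpl in Hk.
      rewrite orb_false_r in Hk. exact Hk. }
    specialize (IH (fun i Hi => HB i ltac:(lia))). specialize (HB L ltac:(lia)). lia.
Qed.

(** * Odd progressions modulo powers of two *)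

Lemma pow2_divide_odd_mul (S x d : nat) : Nat.odd d = true ->
  Nat.divide (2 ^ S) (x * d) -> Nat.divide (2 ^ S) x.
Proof.
  revert x; induction S as [|S IH]; intros x Hd H; [apply Nat.divide_1_l|].
  assert (Hx : Nat.even x = true).
  { destruct (Nat.divide_trans 2 _ _ (Nat.divide_factor_l 2 (2 ^ S))
      ltac:(rewrite <- Nat.pow_succ_r'; exact H)) as [z Hz].
    assert (Hxd : Nat.even (x * d) = true)
      by (rewrite Hz, Nat.even_mul, Nat.even_2, orb_true_r; reflexivity).
    rewrite Nat.even_mul, <- (Nat.negb_odd d), Hd, orb_false_r in Hxd. exact Hxd. }
  apply Nat.even_spec in Hx as [y ->].
  rewrite Nat.pow_succ_r' in *. apply Nat.mul_divide_mono_l, (IH y Hd).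
  rewrite <- Nat.mul_assoc in H. apply Nat.mul_divide_cancel_l in H; [exact H | lia].
Qed.

Lemma mod_add_same (X Y M : nat) : 0 < M -> (X + Y) mod M = X mod M -> Y mod M = 0.
Proof.
  intros HM H. rewrite Nat.Div0.add_mod in H.
  pose proof (Nat.mod_upper_bound X M ltac:(lia)).
  pose proof (Nat.mod_upper_bound Y M ltac:(lia)).
  destruct (Nat.lt_ge_cases (X mod M + Y mod M) M).
  - rewrite Nat.mod_small in H; lia.
  - replace (X mod M + Y mod M) with ((X mod M + Y mod M - M) + 1 * M) in H by lia.
    rewrite Nat.Div0.mod_add, Nat.mod_small in H; lia.
Qed.

Lemma affine_mod_pow2_inj (S a d q q' : nat) : Nat.odd d = true -> q < 2 ^ S -> q' < 2 ^ S ->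
  (a + q * d) mod 2 ^ S = (a + q' * d) mod 2 ^ S -> q = q'.
Proof.
  intros Hd.
  assert (Hlt : forall u v, u < v -> v < 2 ^ S ->
    (a + u * d) mod 2 ^ S <> (a + v * d) mod 2 ^ S).
  { intros u v Huv Hv E.
    replace (a + v * d) with ((a + u * d) + (v - u) * d) in E by nia.
    apply eq_sym, mod_add_same, Nat.Lcm0.mod_divide, pow2_divide_odd_mul in E;
      [|exact Hd | apply pow2_pos].
    apply Nat.divide_pos_le in E; lia. }
  intros Hq Hq' E. destruct (Nat.lt_trichotomy q q') as [H|[H|H]]; [|exact H|].
  - exfalso. exact (Hlt q q' H Hq' E).
  - exfalso. exact (Hlt q' q H Hq (eq_sym E)).
Qed.

Lemma count_affine_le (S a d : nat) (p : nat -> bool) (n : nat) :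
  Nat.odd d = true -> n <= 2 ^ S ->
  count_range (fun q => p ((a + q * d) mod 2 ^ S)) 0 n <= count_range p 0 (2 ^ S).
Proof.
  intros Hd Hn. apply (count_range_inj (fun q => (a + q * d) mod 2 ^ S)).
  - intros i j Hi Hj. apply affine_mod_pow2_inj; [exact Hd | lia | lia].
  - intros. apply Nat.mod_upper_bound. pose proof (pow2_pos S). lia.
Qed.

Lemma count_affine_full (S a d : nat) (p : nat -> bool) : Nat.odd d = true ->
  count_range (fun q => p ((a + q * d) mod 2 ^ S)) 0 (2 ^ S) = count_range p 0 (2 ^ S).
Proof.
  intros Hd.
  pose proof (count_affine_le S a d p (2 ^ S) Hd (le_n _)).
  pose proof (count_affine_le S a d (fun y => negb (p y)) (2 ^ S) Hd (le_n _)).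
  pose proof (count_range_negb (fun q => p ((a + q * d) mod 2 ^ S)) 0 (2 ^ S)).
  pose proof (count_range_negb p 0 (2 ^ S)). simpl in *. lia.
Qed.

Lemma count_affine_bound (S d : nat) (p : nat -> bool) (n a : nat) : Nat.odd d = true ->
  count_range (fun q => p ((a + q * d) mod 2 ^ S)) 0 n <= (n / 2 ^ S + 1) * count_range p 0 (2 ^ S).
Proof.
  intros Hd. pose proof (pow2_pos S).
  revert a; induction n as [n IH] using (well_founded_induction lt_wf); intros a.
  destruct (Nat.lt_ge_cases n (2 ^ S)).
  - rewrite Nat.div_small by assumption. pose proof (count_affine_le S a d p n Hd). lia.
  - replace n with (2 ^ S + (n - 2 ^ S)) at 1 by lia.
    rewrite count_range_add, (count_range_shift _ (0 + 2 ^ S)).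
    rewrite (count_range_ext _ (fun q => p (((a + 2 ^ S * d) + q * d) mod 2 ^ S)) 0 (n - 2 ^ S)).
    2:{ intros i _. do 2 f_equal. nia. }
    pose proof (count_affine_le S a d p (2 ^ S) Hd (le_n _)).
    pose proof (IH (n - 2 ^ S) ltac:(lia) (a + 2 ^ S * d)).
    replace (n / 2 ^ S) with ((n - 2 ^ S) / 2 ^ S + 1).
    + nia.
    + replace n with ((n - 2 ^ S) + 1 * 2 ^ S) at 2 by lia. rewrite Nat.div_add; lia.
Qed.

Lemma count_range_eqb0 (n : nat) : 0 < n -> count_range (fun y => y =? 0) 0 n = 1.
Proof.
  intros Hn. replace n with (1 + (n - 1)) by lia. rewrite count_range_add.
  rewrite (count_range_ext _ (fun _ => false) (0 + 1) (n - 1)), count_range_const; [reflexivity|].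
  intros [|i] Hi; [lia | reflexivity].
Qed.

Lemma count_progression_multiples (A s d w n : nat) : Nat.odd d = true ->
  count_range (fun q => (A + q * (2 ^ s * d)) mod 2 ^ (s + w) =? 0) 0 n <= n / 2 ^ w + 1.
Proof.
  intros Hd. pose proof (pow2_pos s). rewrite Nat.pow_add_r.
  destruct (Nat.eq_dec (A mod 2 ^ s) 0) as [HA|HA].
  - set (e := A / 2 ^ s).
    assert (Ae : A = 2 ^ s * e) by (pose proof (Nat.div_mod A (2 ^ s) ltac:(lia)); unfold e; lia).
    rewrite (count_range_ext _ (fun q => (fun y => y =? 0) ((e + q * d) mod 2 ^ w))).
    + pose proof (count_affine_bound w d (fun y => y =? 0) n e Hd) as Hbound.
      rewrite count_range_eqb0 in Hbound by apply pow2_pos. lia.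
    + intros q _. simpl. rewrite Ae.
      replace (2 ^ s * e + q * (2 ^ s * d)) with (2 ^ s * (e + q * d)) by nia.
      rewrite Nat.Div0.mul_mod_distr_l.
      destruct ((e + q * d) mod 2 ^ w) eqn:Z; simpl; [rewrite Nat.mul_0_r; reflexivity|].
      apply Nat.eqb_neq. nia.
  - rewrite (count_range_ext _ (fun _ => false)), count_range_const; [lia|].
    intros q _. apply Nat.eqb_neq. intro Z. apply HA.
    apply Nat.Lcm0.mod_divide in Z.
    apply (Nat.divide_trans (2 ^ s)) in Z; [|apply Nat.divide_factor_l].
    apply Nat.Lcm0.mod_divide in Z.
    replace (A + q * (2 ^ s * d)) with (A + (q * d) * 2 ^ s) in Z by nia.
    rewrite Nat.Div0.mod_add in Z. exact Z.
Qed.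

(** * Prescribed bits *)

Lemma testbit_lt_pow2 (y S q : nat) : y < 2 ^ S -> S <= q -> Nat.testbit y q = false.
Proof.
  intros. rewrite <- (Nat.mod_small y (2 ^ S)) by assumption.
  apply Nat.mod_pow2_bits_high. assumption.
Qed.

Definition flip_bit (p y : nat) : nat := Nat.lxor y (2 ^ p).

Lemma testbit_flip_bit (p y q : nat) :
  Nat.testbit (flip_bit p y) q = xorb (Nat.testbit y q) (Nat.eqb p q).
Proof. unfold flip_bit. rewrite Nat.lxor_spec, Nat.pow2_bits_eqb. reflexivity. Qed.

Lemma flip_bit_involutive (p y : nat) : flip_bit p (flip_bit p y) = y.
Proof.
  apply Nat.bits_inj. intros q. rewrite !testbit_flip_bit.
  destruct (Nat.testbit y q), (p =? q); reflexivity.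
Qed.

Lemma flip_bit_lt (p y S : nat) : p < S -> y < 2 ^ S -> flip_bit p y < 2 ^ S.
Proof.
  intros Hp Hy.
  replace (flip_bit p y) with (flip_bit p y mod 2 ^ S).
  - apply Nat.mod_upper_bound. pose proof (pow2_pos S). lia.
  - apply Nat.bits_inj. intros q. destruct (Nat.lt_ge_cases q S).
    + apply Nat.mod_pow2_bits_low. assumption.
    + rewrite Nat.mod_pow2_bits_high, testbit_flip_bit, (testbit_lt_pow2 y S q) by assumption.
      destruct (Nat.eqb_spec p q); [lia | reflexivity].
Qed.

Definition bit_pattern (L : list nat) (ps : nat -> nat) (bs : nat -> bool) (y : nat) : bool :=
  forallb (fun i => Bool.eqb (Nat.testbit y (ps i)) (bs i)) L.

Lemma bit_pattern_flip_bit (L : list nat) (ps : nat -> nat) (bs : nat -> bool) (p y : nat) :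
  ~ In p (map ps L) -> bit_pattern L ps bs (flip_bit p y) = bit_pattern L ps bs y.
Proof.
  induction L as [|i L IH]; intros Hp; [reflexivity|]. simpl in *.
  rewrite IH by tauto. rewrite testbit_flip_bit.
  destruct (Nat.eqb_spec p (ps i)) as [->|]; [tauto|]. rewrite xorb_false_r. reflexivity.
Qed.

Lemma count_bit_pattern (L : list nat) (ps : nat -> nat) (bs : nat -> bool) (S : nat) :
  NoDup (map ps L) -> (forall i, In i L -> ps i < S) ->
  count_range (bit_pattern L ps bs) 0 (2 ^ S) = 2 ^ (S - length L).
Proof.
  revert S; induction L as [|i L IH]; intros S Hnd Hb.
  - unfold bit_pattern. simpl. rewrite count_range_const, Nat.sub_0_r. reflexivity.
  - simpl in Hnd. inversion Hnd as [|? ? Hni Hnd']; subst.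
    assert (Hlen : length (i :: L) <= S).
    { rewrite <- (length_map ps), <- (length_seq S 0). apply NoDup_incl_length; [exact Hnd|].
      intros x Hx. apply in_map_iff in Hx as [j [<- Hj]]. apply in_seq. specialize (Hb j Hj). lia. }
    set (p := ps i). set (b := bs i).
    set (agree := fun y => Bool.eqb (Nat.testbit y p) b).
    assert (Hrest := IH S Hnd' (fun j Hj => Hb j (or_intror Hj))).
    rewrite (count_range_split agree) in Hrest.
    (* flipping bit [p] exchanges the patterns agreeing and disagreeing at [p] *)
    assert (Hsym : count_range (fun y => agree y && bit_pattern L ps bs y) 0 (2 ^ S) =
                   count_range (fun y => negb (agree y) && bit_pattern L ps bs y) 0 (2 ^ S)).
    { rewrite <- (count_range_perm (flip_bit p)).
      - apply count_range_ext. intros y _. unfold agree.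
        rewrite bit_pattern_flip_bit, testbit_flip_bit, Nat.eqb_refl by assumption.
        destruct (Nat.testbit y p), b; reflexivity.
      - intros y z _ _ E. rewrite <- (flip_bit_involutive p y), <- (flip_bit_involutive p z), E.
        reflexivity.
      - intros y Hy. apply flip_bit_lt; [apply Hb; left; reflexivity | exact Hy]. }
    change (count_range (fun y => agree y && bit_pattern L ps bs y) 0 (2 ^ S) =
            2 ^ (S - length (i :: L))).
    assert (E : 2 ^ (S - length L) = 2 * 2 ^ (S - length (i :: L))).
    { rewrite <- Nat.pow_succ_r'. f_equal. simpl in *. lia. }
    lia.
Qed.

(** * The word *)

Definition loglog (t : nat) : nat := Nat.log2 (Nat.log2 t).
Definition window_start (j : nat) : nat := j * 2 ^ (j + 1).
Definition window_end (j : nat) : nat := window_start j + (j + 1) * 2 ^ j.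

Definition probe (o : nat) : nat :=
  let j := loglog (Nat.log2 o) in window_start j + (j + 1) * (o mod 2 ^ j).

Definition letter (n : nat) : bool := Nat.testbit (odd_part n) (probe (odd_part n)).

(* [probe_word k] is the letter at the 1-based position [k + 1]. *)
Definition probe_word : word := fun k => letter (S k).

Lemma probe_word_even (k : nat) : probe_word k = even_word probe_word k.
Proof.
  unfold even_word, probe_word, letter.
  replace (S (2 * k + 1)) with (2 * S k) by lia. rewrite odd_part_double by lia. reflexivity.
Qed.

Definition probe_pos (n : nat) : nat := val2 n + probe (odd_part n).

Lemma letter_probe_pos (n : nat) : letter n = Nat.testbit n (probe_pos n).
Proof.
  unfold letter, odd_part, probe_pos. rewrite Nat.div_pow2_bits, Nat.add_comm. reflexivity.
Qed.

Lemma window_end_le_start_S (j : nat) : window_end j <= window_start (S j).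
Proof.
  unfold window_end, window_start. replace (S j + 1) with (S (S j)) by lia.
  rewrite Nat.add_1_r, !Nat.pow_succ_r'. nia.
Qed.

Lemma window_start_mono (i j : nat) : i <= j -> window_start i <= window_start j.
Proof.
  induction 1 as [|j _ IH]; [lia|].
  pose proof (window_end_le_start_S j). unfold window_end in *. lia.
Qed.

Lemma window_end_mono (i j : nat) : i <= j -> window_end i <= window_end j.
Proof.
  intros H. unfold window_end. pose proof (window_start_mono i j H).
  pose proof (pow2_le_mono i j H). nia.
Qed.

Lemma window_separation (v j r v' j' r' : nat) :
  v <= j -> r < 2 ^ j -> v' <= j' -> r' < 2 ^ j' ->
  v + window_start j + (j + 1) * r = v' + window_start j' + (j' + 1) * r' ->
  j = j' /\ r = r' /\ v = v'.
Proof.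
  intros Hv Hr Hv' Hr' E.
  assert (Hlt : forall a b ra rb va vb, va <= a -> ra < 2 ^ a -> a < b ->
      va + window_start a + (a + 1) * ra < vb + window_start b + (b + 1) * rb).
  { intros a b ra rb va vb Ha Hra Hab.
    pose proof (window_end_le_start_S a). pose proof (window_start_mono (S a) b Hab).
    unfold window_end in *. nia. }
  assert (j = j') as <-.
  { destruct (Nat.lt_trichotomy j j') as [H|[H|H]]; [|exact H|].
    - specialize (Hlt j j' r r' v v' Hv Hr H). lia.
    - specialize (Hlt j' j r' r v' v Hv' Hr' H). lia. }
  assert (r = r') as <- by nia. repeat split. lia.
Qed.

Lemma log2_sub_half (x y : nat) : 0 < x -> 2 * y <= x -> Nat.log2 x - 1 <= Nat.log2 (x - y).
Proof.
  intros Hx Hy. destruct (Nat.log2 x) as [|k] eqn:E; [lia|]. rewrite Nat.sub_1_r. simpl.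
  apply Nat.log2_le_pow2; [lia|].
  pose proof (Nat.log2_spec x Hx) as [Hlo _]. rewrite E, Nat.pow_succ_r' in Hlo. lia.
Qed.

Lemma loglog_sub_bounds (m v : nat) : 2 <= loglog m -> v <= Nat.log2 m ->
  loglog m - 1 <= loglog (m - v) <= loglog m.
Proof.
  unfold loglog. intros HJ Hv.
  assert (Hm0 : 0 < m) by (destruct m; [change (2 <= 0) in HJ; lia | lia]).
  set (lam := Nat.log2 m) in *.
  assert (Hlam : 4 <= lam).
  { destruct (Nat.le_gt_cases 4 lam) as [|Hs]; [assumption|].
    pose proof (Nat.log2_le_mono lam 3 ltac:(lia)) as H3. change (Nat.log2 3) with 1 in H3. lia. }
  pose proof (Nat.log2_spec m Hm0) as [Hm _]. fold lam in Hm.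
  pose proof (lt_pow2 lam).
  split.
  - assert (H2v : 2 * v <= m).
    { pose proof (pow2_split 1 lam ltac:(lia)). pose proof (lt_pow2 (lam - 1)).
      change (2 ^ 1) with 2 in *. lia. }
    pose proof (log2_sub_half m v Hm0 H2v).
    pose proof (log2_sub_half lam 1 ltac:(lia) ltac:(lia)).
    pose proof (Nat.log2_le_mono (lam - 1) (Nat.log2 (m - v)) ltac:(lia)). lia.
  - apply Nat.log2_le_mono, Nat.log2_le_mono. lia.
Qed.

Lemma square_le_pow2 (lam : nat) : 16 <= lam -> 4 * lam * lam + lam <= 2 ^ lam.
Proof.
  intros H. enough (8 * lam * lam <= 2 ^ lam) by nia.
  induction H as [|lam H IH].
  - apply Nat.leb_le. vm_compute. reflexivity.
  - rewrite Nat.pow_succ_r'. nia.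
Qed.

Lemma window_end_loglog_lt (m e : nat) : 4 <= loglog m -> e <= loglog m ->
  e + window_end (loglog m) < m.
Proof.
  unfold loglog. intros HJ He.
  assert (Hm0 : 0 < m) by (destruct m; [change (4 <= 0) in HJ; lia | lia]).
  set (lam := Nat.log2 m) in *. set (J := Nat.log2 lam) in *.
  assert (Hlam0 : 0 < lam) by (destruct lam; [change (4 <= 0) in HJ; lia | lia]).
  pose proof (Nat.log2_spec m Hm0) as [Hm _]. pose proof (Nat.log2_spec lam Hlam0) as [HJlam _].
  fold lam in Hm. fold J in HJlam.
  pose proof (pow2_le_mono 4 J HJ). change (2 ^ 4) with 16 in *.
  pose proof (square_le_pow2 lam ltac:(lia)). pose proof (lt_pow2 J).
  assert (Hend : window_end J <= 4 * lam * lam - 1).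
  { unfold window_end, window_start. rewrite Nat.pow_add_r. change (2 ^ 1) with 2. nia. }
  lia.
Qed.

(** * Aligned blocks within one level *)

Definition near (a b err : nat) : Prop := a <= b + err /\ b <= a + err.

Lemma near_add (a b e a' b' e' : nat) :
  near a b e -> near a' b' e' -> near (a + a') (b + b') (e + e').
Proof. unfold near. lia. Qed.

Lemma near_weaken (a b e e' : nat) : e <= e' -> near a b e -> near a b e'.
Proof. unfold near. lia. Qed.

Lemma near_mul (k a b e : nat) : near a b e -> near (k * a) (k * b) (k * e).
Proof.
  unfold near. intros [H1 H2].
  split; rewrite <- Nat.mul_add_distr_l; apply Nat.mul_le_mono_l; assumption.
Qed.

Lemma near_bounded (a b e : nat) : a <= e -> b <= e -> near a b e.
Proof. unfold near. lia. Qed.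

Lemma near_sum (f h err : nat -> nat) (n : nat) : (forall t, t < n -> near (f t) (h t) (err t)) ->
  near (sum_upto f n) (sum_upto h n) (sum_upto err n).
Proof.
  intros H. induction n as [|n IH]; simpl; [apply near_bounded; lia|].
  apply near_add; [apply IH; intros; apply H|apply H]; lia.
Qed.

(* Counting [block_matches x u] over [k < n / length u] is exactly [aligned_occ x u n]. *)
Definition block_matches (x : word) (u : list bool) (k : nat) : bool :=
  forallb (fun j => Bool.eqb (x (k * length u + j)) (nth j u false)) (seq 0 (length u)).

Lemma forallb_ext_in (f h : nat -> bool) (L : list nat) :
  (forall x, In x L -> f x = h x) -> forallb f L = forallb h L.
Proof.
  induction L as [|a L IH]; intros H; simpl; [reflexivity|].
  rewrite H, IH; [reflexivity | intros; apply H; right; assumption | left; reflexivity].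
Qed.

Lemma negb_forallb_negb (f : nat -> bool) (L : list nat) :
  negb (forallb (fun x => negb (f x)) L) = existsb f L.
Proof.
  induction L as [|a L IH]; simpl; [reflexivity|].
  rewrite negb_andb, negb_involutive, IH. reflexivity.
Qed.

Section Level.
Variables (u : list bool) (m : nat).
Local Notation l := (length u).
Local Notation J := (loglog m).
Hypothesis Hu : 0 < l.
Hypothesis Hdeep : val2 l + l + 3 <= J.

Definition in_level (n : nat) : Prop := 2 ^ m <= n < 2 ^ (m + 1).
Definition base : nat := window_start (J - 1).
Definition width : nat := window_end J - base.

Definition shallow (n : nat) : bool :=
  forallb (fun i => negb ((n + i) mod 2 ^ J =? 0)) (seq 0 l).

Lemma J_le_log2 : J <= Nat.log2 m.
Proof. unfold loglog. pose proof (Nat.log2_le_lin (Nat.log2 m)). lia. Qed.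

Lemma valuation_window (v : nat) : v < J ->
  J - 1 <= loglog (m - v) /\ l <= 2 ^ loglog (m - v) /\
  base <= window_start (loglog (m - v)) /\ v + loglog (m - v) <= base /\
  window_end (loglog (m - v)) <= base + width.
Proof.
  intros Hv.
  destruct (loglog_sub_bounds m v ltac:(lia) ltac:(pose proof J_le_log2; lia)) as [Hlo Hhi].
  set (j := loglog (m - v)) in *.
  pose proof (lt_pow2 l). pose proof (pow2_le_mono l j ltac:(lia)).
  pose proof (lt_pow2 J). pose proof (pow2_le_mono 2 J ltac:(lia)).
  unfold width, base. repeat split; try lia.
  - apply window_start_mono. lia.
  - unfold window_start. replace (J - 1 + 1) with J by lia. change (2 ^ 2) with 4 in *. nia.
  - pose proof (window_end_mono j J Hhi). pose proof (window_start_mono (J - 1) J ltac:(lia)).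
    unfold window_end in *. lia.
Qed.

Lemma J_le_base : J <= base.
Proof.
  unfold base, window_start. replace (J - 1 + 1) with J by lia.
  pose proof (pow2_le_mono 1 J ltac:(lia)). change (2 ^ 1) with 2 in *. nia.
Qed.

Lemma l_le_width : l <= width.
Proof.
  unfold width, base, window_end. pose proof (window_start_mono (J - 1) J ltac:(lia)).
  pose proof (lt_pow2 l). pose proof (pow2_le_mono l J ltac:(lia)). nia.
Qed.

Lemma base_add_width : base + width = window_end J.
Proof.
  unfold width, base. pose proof (window_start_mono (J - 1) J ltac:(lia)).
  unfold window_end in *. lia.
Qed.

Lemma shallow_spec (n i : nat) : shallow n = true -> i < l -> (n + i) mod 2 ^ J <> 0.
Proof.
  unfold shallow. rewrite forallb_forall. intros H Hi E.
  specialize (H i ltac:(apply in_seq; lia)). rewrite E in H. discriminate.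
Qed.

Lemma shallow_no_carry (n w i : nat) : shallow n = true -> J <= w -> i < l ->
  n mod 2 ^ w + i < 2 ^ w.
Proof.
  intros Hs Hw Hi. pose proof (pow2_pos w).
  destruct (Nat.lt_ge_cases (n mod 2 ^ w + i) (2 ^ w)) as [|Hge]; [assumption|exfalso].
  set (i' := 2 ^ w - n mod 2 ^ w).
  pose proof (Nat.mod_upper_bound n (2 ^ w) ltac:(lia)).
  apply (shallow_spec n i' Hs); [lia|].
  replace (n + i') with (2 ^ w * (n / 2 ^ w + 1)).
  - apply mod_pow2_mul. assumption.
  - pose proof (Nat.div_mod n (2 ^ w) ltac:(lia)). unfold i'. nia.
Qed.

Lemma probe_pos_level (n i : nat) : shallow n = true -> in_level n -> i < l ->
  val2 (n + i) < J /\
  probe_pos (n + i) = val2 (n + i) + window_start (loglog (m - val2 (n + i))) +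
    (loglog (m - val2 (n + i)) + 1) * (odd_part (n + i) mod 2 ^ loglog (m - val2 (n + i))).
Proof.
  intros Hs Hn Hi. unfold in_level in Hn.
  destruct (odd_part_spec (n + i)) as [Ho E]; [pose proof (pow2_pos m); lia|].
  set (v := val2 (n + i)) in *. set (o := odd_part (n + i)) in *.
  assert (Hv : v < J).
  { destruct (Nat.lt_ge_cases v J) as [|HvJ]; [assumption|].
    exfalso. apply (shallow_spec n i Hs Hi). rewrite E. apply mod_pow2_mul. assumption. }
  assert (Hlog : Nat.log2 o = m - v).
  { assert (Hm : n + i < 2 ^ (m + 1)).
    { pose proof (shallow_no_carry n (m + 1) i Hs ltac:(pose proof J_le_log2;
        pose proof (Nat.log2_le_lin m); lia) Hi).
      rewrite Nat.mod_small in *; lia. }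
    assert (Hlog : Nat.log2 (n + i) = m).
    { apply Nat.log2_unique; [lia|]. replace (S m) with (m + 1) by lia. lia. }
    rewrite E, Nat.mul_comm, Nat.log2_mul_pow2 in Hlog by (pose proof (odd_pos o Ho); lia). lia. }
  split; [assumption|]. unfold probe_pos, probe. fold v o. rewrite Hlog. lia.
Qed.

Lemma probe_pos_window (n i : nat) : shallow n = true -> in_level n -> i < l ->
  base <= probe_pos (n + i) < base + width.
Proof.
  intros Hs Hn Hi. destruct (probe_pos_level n i Hs Hn Hi) as [Hv ->].
  destruct (valuation_window _ Hv) as [Hj [_ [Hb [_ He]]]].
  set (j := loglog (m - val2 (n + i))) in *.
  pose proof (Nat.mod_upper_bound (odd_part (n + i)) (2 ^ j) ltac:(pose proof (pow2_pos j); lia)).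
  unfold window_end in He. nia.
Qed.

Lemma probe_pos_lt_inj (n i i' : nat) : shallow n = true -> in_level n -> i < i' -> i' < l ->
  probe_pos (n + i) <> probe_pos (n + i').
Proof.
  intros Hs Hn Hii Hi' E.
  assert (Hn0 : 0 < n) by (unfold in_level in Hn; pose proof (pow2_pos m); lia).
  destruct (probe_pos_level n i Hs Hn ltac:(lia)) as [V1 P1].
  destruct (probe_pos_level n i' Hs Hn Hi') as [V2 P2].
  destruct (odd_part_spec (n + i)) as [_ E1]; [lia|].
  destruct (odd_part_spec (n + i')) as [_ E2]; [lia|].
  destruct (valuation_window _ V1) as [J1 [L1 _]]. destruct (valuation_window _ V2) as [J2 [L2 _]].
  rewrite P1, P2 in E.
  set (v := val2 (n + i)) in *. set (v' := val2 (n + i')) in *.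
  set (o := odd_part (n + i)) in *. set (o' := odd_part (n + i')) in *.
  pose proof (pow2_pos (loglog (m - v))). pose proof (pow2_pos (loglog (m - v'))).
  destruct (window_separation v (loglog (m - v)) (o mod 2 ^ loglog (m - v))
                             v' (loglog (m - v')) (o' mod 2 ^ loglog (m - v')))
    as [Ej [Er Ev]]; try lia; try (apply Nat.mod_upper_bound; lia).
  (* equal valuations and equal residues force [o' - o >= 2 ^ j >= l] *)
  rewrite <- Ev in *. set (j := loglog (m - v)) in *.
  assert (Hoo : o < o') by (pose proof (pow2_pos v); nia).
  pose proof (Nat.div_mod o (2 ^ j) ltac:(lia)).
  pose proof (Nat.div_mod o' (2 ^ j) ltac:(lia)).
  assert (o / 2 ^ j < o' / 2 ^ j) by nia.
  assert (2 ^ j <= o' - o) by nia.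
  pose proof (pow2_pos v). nia.
Qed.

Lemma probe_pos_inj (n i i' : nat) : shallow n = true -> in_level n -> i < l -> i' < l ->
  probe_pos (n + i) = probe_pos (n + i') -> i = i'.
Proof.
  intros Hs Hn Hi Hi' E. destruct (Nat.lt_trichotomy i i') as [H|[H|H]]; [|exact H|]; exfalso.
  - exact (probe_pos_lt_inj n i i' Hs Hn H Hi' E).
  - exact (probe_pos_lt_inj n i' i Hs Hn H Hi (eq_sym E)).
Qed.

Lemma shallow_shift (n q : nat) : shallow (n + q * 2 ^ base) = shallow n.
Proof.
  unfold shallow. apply forallb_ext_in. intros i _. do 2 f_equal.
  replace (n + q * 2 ^ base + i) with ((n + i) + (q * 2 ^ (base - J)) * 2 ^ J).
  - apply Nat.Div0.mod_add.
  - rewrite (pow2_split J base) by exact J_le_base. nia.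
Qed.

Lemma probe_pos_shift (n q i : nat) : shallow n = true -> in_level n ->
  in_level (n + q * 2 ^ base) -> i < l ->
  probe_pos (n + q * 2 ^ base + i) = probe_pos (n + i).
Proof.
  intros Hs Hn Hn' Hi.
  assert (Hn0 : 0 < n) by (unfold in_level in Hn; pose proof (pow2_pos m); lia).
  assert (Hs' : shallow (n + q * 2 ^ base) = true) by (rewrite shallow_shift; assumption).
  destruct (probe_pos_level n i Hs Hn Hi) as [V1 P1].
  destruct (probe_pos_level _ i Hs' Hn' Hi) as [_ P2].
  destruct (odd_part_spec (n + i)) as [O1 E1]; [lia|].
  set (v := val2 (n + i)) in *. set (o := odd_part (n + i)) in *.
  destruct (valuation_window v V1) as [Hj [_ [_ [Hvj _]]]].
  set (j := loglog (m - v)) in *.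
  set (o' := o + q * 2 ^ (base - v)).
  assert (Ey : n + q * 2 ^ base + i = 2 ^ v * o').
  { unfold o'. rewrite (pow2_split v base) by lia. nia. }
  assert (O' : Nat.odd o' = true).
  { unfold o'. replace (base - v) with (S (base - v - 1)) by lia.
    rewrite Nat.pow_succ_r', Nat.odd_add, O1.
    replace (q * (2 * 2 ^ (base - v - 1))) with (2 * (q * 2 ^ (base - v - 1))) by lia.
    rewrite Nat.odd_even. reflexivity. }
  destruct (val2_odd_part_pow2_mul v o' O') as [Ev Eo]. rewrite <- Ey in Ev, Eo.
  rewrite P2, P1, Ev, Eo. f_equal. f_equal. unfold o'.
  replace (q * 2 ^ (base - v)) with ((q * 2 ^ (base - v - j)) * 2 ^ j).
  - rewrite Nat.Div0.mod_add. reflexivity.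
  - rewrite (pow2_split j (base - v)) by lia. nia.
Qed.

Lemma letter_window_bit (n i : nat) : shallow n = true -> in_level n -> i < l ->
  letter (n + i) = Nat.testbit ((n / 2 ^ base) mod 2 ^ width) (probe_pos (n + i) - base).
Proof.
  intros Hs Hn Hi. rewrite letter_probe_pos.
  destruct (probe_pos_window n i Hs Hn Hi) as [R1 R2].
  rewrite Nat.mod_pow2_bits_low by lia.
  assert (Ed : (n + i) / 2 ^ base = n / 2 ^ base).
  { pose proof (shallow_no_carry n base i Hs J_le_base Hi). pose proof (pow2_pos base).
    rewrite (Nat.div_mod n (2 ^ base)) at 1 by lia.
    rewrite <- Nat.add_assoc, Nat.add_comm, Nat.mul_comm, Nat.div_add by lia.
    rewrite Nat.div_small by lia. reflexivity. }
  rewrite <- Ed, Nat.div_pow2_bits. f_equal. lia.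
Qed.

Definition deep_block (k : nat) : bool := negb (shallow (k * l + 1)).

Definition period : nat := 2 ^ (base - val2 l).

Lemma period_mul_length : period * l = 2 ^ base * odd_part l.
Proof.
  destruct (odd_part_spec l Hu) as [_ E]. unfold period.
  pose proof J_le_base. set (s := val2 l) in *. set (l' := odd_part l) in *.
  rewrite (pow2_split s base), E by lia. ring.
Qed.

Lemma block_matches_pattern (k : nat) : shallow (k * l + 1) = true -> in_level (k * l + 1) ->
  block_matches probe_word u k =
  bit_pattern (seq 0 l) (fun i => probe_pos (k * l + 1 + i) - base) (fun i => nth i u false)
    (((k * l + 1) / 2 ^ base) mod 2 ^ width).
Proof.
  intros Hs Hn. apply forallb_ext_in. intros i Hi. apply in_seq in Hi.
  unfold probe_word. replace (S (k * l + i)) with (k * l + 1 + i) by lia.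
  rewrite letter_window_bit by (assumption || lia). reflexivity.
Qed.

Lemma count_window_pattern (n : nat) : shallow n = true -> in_level n ->
  count_range (bit_pattern (seq 0 l) (fun i => probe_pos (n + i) - base) (fun i => nth i u false))
    0 (2 ^ width) = 2 ^ (width - l).
Proof.
  intros Hs Hn. rewrite count_bit_pattern, length_seq; [reflexivity| |].
  - apply NoDup_map_NoDup_ForallPairs; [|apply seq_NoDup].
    intros i j Hi Hj E. apply in_seq in Hi, Hj.
    pose proof (probe_pos_window n i Hs Hn ltac:(lia)).
    pose proof (probe_pos_window n j Hs Hn ltac:(lia)).
    apply (probe_pos_inj n); [assumption..|lia|lia|lia].
  - intros i Hi. apply in_seq in Hi. pose proof (probe_pos_window n i Hs Hn ltac:(lia)). lia.
Qed.

(* Along a column the window runs over all residues while the bits it is read at stay put. *)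
Lemma column_near (k0 t : nat) : t < period ->
  (forall k, k0 <= k < k0 + 2 ^ width * period -> in_level (k * l + 1)) ->
  near (count_range (fun q => block_matches probe_word u (k0 + t + q * period)) 0 (2 ^ width)
          * 2 ^ l)
       (2 ^ width)
       (count_range (fun q => deep_block (k0 + t + q * period)) 0 (2 ^ width) * 2 ^ l).
Proof.
  intros Ht Hlev.
  set (n := (k0 + t) * l + 1).
  assert (En : forall q, (k0 + t + q * period) * l + 1 = n + (q * odd_part l) * 2 ^ base).
  { intros q. unfold n. pose proof period_mul_length. nia. }
  assert (Hn : in_level n) by (apply Hlev; pose proof (pow2_pos width); nia).
  assert (Hnq : forall q, q < 2 ^ width -> in_level (n + (q * odd_part l) * 2 ^ base)).
  { intros q Hq. rewrite <- En. apply Hlev. nia. }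
  destruct (shallow n) eqn:Hs.
  - assert (Hcount : count_range (fun q => block_matches probe_word u (k0 + t + q * period))
                       0 (2 ^ width) = 2 ^ (width - l)).
    { rewrite <- (count_window_pattern n Hs Hn).
      set (pat := bit_pattern _ _ _).
      rewrite <- (count_affine_full width (n / 2 ^ base) (odd_part l) pat)
        by apply (odd_part_spec l Hu).
      apply count_range_ext. intros q Hq.
      assert (Hsq : shallow ((k0 + t + q * period) * l + 1) = true)
        by (rewrite En, shallow_shift; assumption).
      rewrite block_matches_pattern by first [exact Hsq | rewrite En; apply Hnq; lia].
      rewrite En, Nat.div_add by (pose proof (pow2_pos base); lia).
      apply forallb_ext_in. intros i Hi. apply in_seq in Hi.
      rewrite probe_pos_shift by first [assumption | apply Hnq; lia | lia]. reflexivity. }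
    rewrite Hcount, (count_range_ext _ (fun _ => false)), count_range_const.
    + rewrite <- Nat.pow_add_r, Nat.sub_add by apply l_le_width. unfold near. lia.
    + intros q _. unfold deep_block. rewrite En, shallow_shift, Hs. reflexivity.
  - rewrite (count_range_ext (fun q => deep_block _) (fun _ => true)), count_range_const.
    + pose proof (count_range_le (fun q => block_matches probe_word u (k0 + t + q * period))
                                 0 (2 ^ width)).
      pose proof (pow2_pos l). apply near_bounded; nia.
    + intros q _. unfold deep_block. rewrite En, shallow_shift, Hs. reflexivity.
Qed.

Lemma period_near (k0 : nat) :
  (forall k, k0 <= k < k0 + 2 ^ width * period -> in_level (k * l + 1)) ->
  near (count_range (block_matches probe_word u) k0 (2 ^ width * period) * 2 ^ l)
       (2 ^ width * period)
       (count_range deep_block k0 (2 ^ width * period) * 2 ^ l).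
Proof.
  intros Hlev. rewrite !count_range_columns.
  replace (2 ^ width * period) with (sum_upto (fun _ => 2 ^ width) period)
    by (rewrite sum_upto_const; lia).
  rewrite !(Nat.mul_comm _ (2 ^ l)), !sum_upto_mul.
  apply near_sum. intros t Ht. rewrite !(Nat.mul_comm (2 ^ l)). apply column_near; assumption.
Qed.

Lemma deep_block_count (k0 n : nat) :
  count_range deep_block k0 n <= l * (n / 2 ^ (J - val2 l) + 1).
Proof.
  destruct (odd_part_spec l Hu) as [Hodd E].
  rewrite (count_range_ext _
            (fun k => existsb (fun i => (k * l + 1 + i) mod 2 ^ J =? 0) (seq 0 l))).
  2:{ intros k _. apply negb_forallb_negb. }
  apply count_range_existsb. intros i Hi.
  rewrite count_range_shift.
  rewrite (count_range_ext _ (fun q => (k0 * l + 1 + i + q * (2 ^ val2 l * odd_part l))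
                                        mod 2 ^ (val2 l + (J - val2 l)) =? 0)).
  - apply count_progression_multiples. exact Hodd.
  - intros q _. replace (val2 l + (J - val2 l)) with J by lia. rewrite <- E.
    replace (k0 * l + 1 + i + q * l) with ((k0 + q) * l + 1 + i) by nia. reflexivity.
Qed.

Lemma interval_near (k0 n : nat) :
  (forall k, k0 <= k < k0 + n -> in_level (k * l + 1)) ->
  near (count_range (block_matches probe_word u) k0 n * 2 ^ l) n
       ((count_range deep_block k0 n + 2 ^ (base + width)) * 2 ^ l).
Proof.
  set (P := 2 ^ width * period).
  assert (HP : 0 < P <= 2 ^ (base + width)).
  { unfold P, period. pose proof (pow2_pos width). pose proof (pow2_pos (base - val2 l)).
    rewrite Nat.pow_add_r. split; [nia|]. rewrite Nat.mul_comm.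
    apply Nat.mul_le_mono_r, pow2_le_mono. lia. }
  revert k0; induction n as [n IH] using (well_founded_induction lt_wf); intros k0 Hlev.
  destruct (Nat.lt_ge_cases n P) as [Hsmall|Hbig].
  - pose proof (count_range_le (block_matches probe_word u) k0 n). pose proof (pow2_pos l).
    apply near_bounded; nia.
  - pose proof (period_near k0 (fun k Hk => Hlev k ltac:(lia))) as H1.
    pose proof (IH (n - P) ltac:(lia) (k0 + P) (fun k Hk => Hlev k ltac:(lia))) as H2.
    fold P in H1. replace n with (P + (n - P)) by lia. rewrite !count_range_add.
    unfold near in *. rewrite !Nat.mul_add_distr_r in *. lia.
Qed.

Lemma level_near (e k0 n : nat) : e + val2 l + l + 3 <= J ->
  (forall k, k0 <= k < k0 + n -> in_level (k * l + 1)) ->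
  near (2 ^ e * (count_range (block_matches probe_word u) k0 n * 2 ^ l)) (2 ^ e * n)
       ((n + 2 ^ m) * 2 ^ l).
Proof.
  intros He Hlev.
  pose proof (deep_block_count k0 n) as Hdeep_count.
  set (B := count_range deep_block k0 n) in *. set (D := 2 ^ (J - val2 l)) in *.
  set (X := 2 ^ (base + width)).
  assert (Hdensity : 2 ^ e * l <= D).
  { pose proof (lt_pow2 l). pose proof (pow2_le_mono (e + l) (J - val2 l) ltac:(lia)).
    rewrite Nat.pow_add_r in *. unfold D. nia. }
  assert (Hwindow : 2 ^ e * (l + X) <= 2 ^ m).
  { pose proof (window_end_loglog_lt m e ltac:(lia) ltac:(lia)).
    pose proof (lt_pow2 l). pose proof l_le_width.
    assert (l <= X) by (unfold X; pose proof (pow2_le_mono l (base + width) ltac:(lia)); lia).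
    assert (2 ^ e * (2 * X) <= 2 ^ m).
    { unfold X. rewrite <- Nat.pow_succ_r', <- Nat.pow_add_r. apply pow2_le_mono.
      rewrite base_add_width. lia. }
    nia. }
  assert (Herr : 2 ^ e * (B + X) <= n + 2 ^ m).
  { pose proof (Nat.Div0.mul_div_le n D).
    assert (2 ^ e * B <= 2 ^ e * l * (n / D + 1))
      by (rewrite <- Nat.mul_assoc; apply Nat.mul_le_mono_l; exact Hdeep_count).
    nia. }
  apply (near_weaken _ _ (2 ^ e * ((B + X) * 2 ^ l))).
  - rewrite Nat.mul_assoc. apply Nat.mul_le_mono_r. exact Herr.
  - apply near_mul, interval_near, Hlev.
Qed.

End Level.

(** * Summing over levels *)

Lemma loglog_mono (a b : nat) : a <= b -> loglog a <= loglog b.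
Proof. intros. apply Nat.log2_le_mono, Nat.log2_le_mono. assumption. Qed.

Lemma loglog_pow2_pow2 (K : nat) : loglog (2 ^ 2 ^ K) = K.
Proof. unfold loglog. rewrite !Nat.log2_pow2; lia. Qed.

Section Frequency.
Variable u : list bool.
Local Notation l := (length u).
Local Notation C := (count_range (block_matches probe_word u)).
Hypothesis Hu : 0 < l.

Definition level_start (m : nat) : nat := (2 ^ m + l - 2) / l.

Lemma level_start_spec (m k : nat) : level_start m <= k <-> 2 ^ m <= k * l + 1.
Proof.
  unfold level_start. pose proof (pow2_pos m) as Hm. split; intros H.
  - pose proof (Nat.div_mod (2 ^ m + l - 2) l ltac:(lia)).
    pose proof (Nat.mod_upper_bound (2 ^ m + l - 2) l ltac:(lia)).
    pose proof (Nat.mul_le_mono_l _ _ l H). nia.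
  - apply Nat.lt_succ_r, Nat.Div0.div_lt_upper_bound. nia.
Qed.

Lemma levels_near (e m0 : nat) : e + val2 l + l + 3 <= loglog m0 ->
  forall d k0 n, (forall k, k0 <= k < k0 + n -> 2 ^ m0 <= k * l + 1 < 2 ^ (m0 + d + 1)) ->
  near (2 ^ e * (C k0 n * 2 ^ l)) (2 ^ e * n) ((n + 2 ^ (m0 + d + 1)) * 2 ^ l).
Proof.
  intros Hdeep d. induction d as [|d IH]; intros k0 n Hlev.
  - rewrite Nat.add_0_r in *.
    apply (near_weaken _ _ ((n + 2 ^ m0) * 2 ^ l)).
    + apply Nat.mul_le_mono_r. pose proof (pow2_le_mono m0 (m0 + 1) ltac:(lia)). lia.
    + apply level_near; [exact Hu | lia | lia | exact Hlev].
  - set (m := m0 + S d).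
    (* [b] cuts the range at the first block of level [m] *)
    set (b := Nat.max k0 (Nat.min (k0 + n) (level_start m))).
    assert (Hdeep' : e + val2 l + l + 3 <= loglog m)
      by (pose proof (loglog_mono m0 m ltac:(lia)); lia).
    pose proof (IH k0 (b - k0)) as Hlow.
    pose proof (level_near u m Hu ltac:(lia) e b (k0 + n - b) Hdeep') as Hhigh.
    replace n with ((b - k0) + (k0 + n - b)) by lia.
    rewrite count_range_add. replace (k0 + (b - k0)) with b by lia.
    apply (near_weaken _ _
      (((b - k0) + 2 ^ (m0 + d + 1)) * 2 ^ l + ((k0 + n - b) + 2 ^ m) * 2 ^ l)).
    + replace (m0 + d + 1) with m by lia.
      replace (2 ^ (m + 1)) with (2 * 2 ^ m) by (rewrite Nat.add_1_r, Nat.pow_succ_r'; reflexivity).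
      nia.
    + rewrite Nat.mul_add_distr_r, !Nat.mul_add_distr_l. apply near_add.
      * apply Hlow. intros k Hk. split; [apply Hlev; lia|].
        replace (m0 + d + 1) with m by lia.
        destruct (Nat.lt_ge_cases (k * l + 1) (2 ^ m)) as [|Hge]; [assumption|].
        apply level_start_spec in Hge. lia.
      * apply Hhigh. intros k Hk. unfold in_level.
        split; [apply level_start_spec; lia|].
        replace (m + 1) with (m0 + S d + 1) by lia. apply Hlev. lia.
Qed.

Lemma block_count_near (e : nat) : exists A, forall N,
  near (2 ^ e * (C 0 N * 2 ^ l)) (2 ^ e * N) (A + (N + 2 * (N * l + 1)) * 2 ^ l).
Proof.
  set (m0 := 2 ^ 2 ^ (e + val2 l + l + 3)).
  assert (Hdeep : e + val2 l + l + 3 <= loglog m0) by (unfold m0; rewrite loglog_pow2_pow2; lia).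
  set (k0 := level_start m0).
  exists (2 ^ e * k0 * 2 ^ l). intros N.
  pose proof (pow2_pos l). pose proof (pow2_pos e).
  assert (Hhead : forall n, n <= k0 ->
    near (2 ^ e * (C 0 n * 2 ^ l)) (2 ^ e * n) (2 ^ e * k0 * 2 ^ l)).
  { intros n Hn. pose proof (count_range_le (block_matches probe_word u) 0 n).
    apply near_bounded.
    - rewrite Nat.mul_assoc. apply Nat.mul_le_mono_r, Nat.mul_le_mono_l. lia.
    - pose proof (Nat.mul_le_mono_l n k0 (2 ^ e) Hn). nia. }
  destruct (Nat.le_gt_cases N k0) as [Hsmall|Hbig].
  - apply (near_weaken _ _ (2 ^ e * k0 * 2 ^ l)); [lia | apply Hhead, Hsmall].
  - set (m := Nat.log2 (N * l + 1)).
    pose proof (Nat.log2_spec (N * l + 1) ltac:(lia)) as [Hm1 Hm2]. fold m in Hm1, Hm2.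
    assert (Hk0 : 2 ^ m0 <= k0 * l + 1) by (apply level_start_spec; lia).
    assert (Hm0 : m0 <= m).
    { pose proof (Nat.mul_le_mono_r k0 N l ltac:(lia)).
      apply (Nat.log2_le_pow2 (N * l + 1) m0); lia. }
    pose proof (levels_near e m0 Hdeep (m - m0) k0 (N - k0)) as Htail.
    replace (m0 + (m - m0) + 1) with (S m) in Htail by lia.
    destruct Htail as [T1 T2].
    { intros k Hk. split; [apply level_start_spec; lia | nia]. }
    destruct (Hhead k0 (le_n _)) as [H1 H2].
    replace (C 0 N) with (C 0 k0 + C k0 (N - k0)) by (rewrite <- count_range_add; f_equal; lia).
    assert (2 ^ S m * 2 ^ l <= 2 * (N * l + 1) * 2 ^ l)
      by (apply Nat.mul_le_mono_r; simpl in *; lia).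
    unfold near. nia.
Qed.

Local Open Scope R_scope.

Lemma near_INR (a b err : nat) : near a b err -> Rabs (INR a - INR b) <= INR err.
Proof.
  intros [H1 H2]. apply le_INR in H1, H2. rewrite plus_INR in H1, H2. apply Rabs_le. lra.
Qed.

Lemma block_count_sublinear (eps : R) : 0 < eps -> exists A, forall N,
  Rabs (INR (C 0 N) - INR N * / 2 ^ l) <= A + eps * INR N.
Proof.
  intros Heps.
  destruct (INR_archimed eps (1 + 2 * INR l)) as [e He]; [lra|].
  destruct (block_count_near e) as [A HA].
  set (E := 2 ^ e). set (P := 2 ^ l).
  assert (HE : 0 < E) by (apply pow_lt; lra). assert (HP : 0 < P) by (apply pow_lt; lra).
  assert (HeE : INR e < E).
  { pose proof (lt_INR _ _ (lt_pow2 e)) as H. rewrite pow_INR in H. simpl (INR 2) in H.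
    replace (1 + 1) with 2 in H by lra. exact H. }
  exists (INR A / (E * P) + 2 / E). intros N.
  pose proof (near_INR _ _ _ (HA N)) as H.
  repeat rewrite ?mult_INR, ?plus_INR, ?pow_INR in H. simpl (INR 2) in H. simpl (INR 1) in H.
  replace (1 + 1) with 2 in H by lra. fold E P in H.
  set (c := INR (C 0 N)) in *. set (n := INR N) in *.
  assert (Hn : 0 <= n) by apply pos_INR.
  replace (c - n * / P) with ((E * (c * P) - E * n) / (E * P)) by (field; lra).
  unfold Rdiv.
  rewrite Rabs_mult, (Rabs_right (/ (E * P))) by (apply Rle_ge, Rlt_le, Rinv_0_lt_compat; nra).
  apply (Rmult_le_reg_r (E * P)); [nra|].
  rewrite Rmult_assoc, Rinv_l, Rmult_1_r by nra.
  assert (Hgrowth : (1 + 2 * INR l) <= eps * E) by nra.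
  apply (Rle_trans _ _ _ H).
  replace ((INR A * / (E * P) + 2 * / E + eps * n) * (E * P)) with (INR A + 2 * P + eps * E * n * P)
    by (field; lra).
  assert ((1 + 2 * INR l) * n * P <= eps * E * n * P)
    by (apply Rmult_le_compat_r; [lra | apply Rmult_le_compat_r; lra]).
  nra.
Qed.

End Frequency.

Open Scope R_scope.

Lemma Un_cv_block_ratio (f : nat -> nat) (l : nat) (p : R) : (0 < l)%nat -> 0 <= p ->
  (forall eps, 0 < eps -> exists A, forall N, Rabs (INR (f N) - INR N * p) <= A + eps * INR N) ->
  Un_cv (fun n => INR (f (n / l)%nat) / (INR n / INR l)) p.
Proof.
  intros Hl Hp Hf eps Heps.
  destruct (Hf (eps / 2) ltac:(lra)) as [A HA].
  set (L := INR l). assert (HL : 1 <= L) by (apply (le_INR 1); lia).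
  destruct (INR_archimed (eps / 2) (L * (Rabs A + p))) as [n0 Hn0]; [lra|].
  exists (S n0). intros n Hn. unfold R_dist.
  set (N := (n / l)%nat).
  assert (HNn : (N * l <= n < N * l + l)%nat).
  { pose proof (Nat.div_mod n l ltac:(lia)). pose proof (Nat.mod_upper_bound n l ltac:(lia)).
    unfold N. lia. }
  destruct HNn as [HNn1 HNn2].
  apply le_INR in HNn1. apply lt_INR in HNn2.
  rewrite mult_INR in HNn1. rewrite plus_INR, mult_INR in HNn2.
  fold L in HNn1, HNn2.
  set (x := INR n) in *. set (y := INR N) in *.
  assert (Hx : INR n0 < x) by (apply lt_INR; lia). pose proof (pos_INR n0).
  assert (Hy : 0 <= y) by apply pos_INR.
  pose proof (HA N) as HAN. fold y in HAN. set (c := INR (f N)) in *.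
  replace (c / (x / L) - p) with ((L * (c - y * p) + p * (y * L - x)) / x) by (field; lra).
  unfold Rdiv.
  rewrite Rabs_mult, (Rabs_right (/ x)) by (apply Rle_ge, Rlt_le, Rinv_0_lt_compat; nra).
  apply (Rmult_lt_reg_r x); [nra|]. rewrite Rmult_assoc, Rinv_l, Rmult_1_r by nra.
  eapply Rle_lt_trans; [apply Rabs_triang|].
  rewrite !Rabs_mult, (Rabs_right L), (Rabs_right p) by lra.
  assert (Rabs (y * L - x) <= L) by (apply Rabs_le; lra).
  assert (L * Rabs (c - y * p) <= L * (Rabs A + eps / 2 * y))
    by (apply Rmult_le_compat_l; [lra | pose proof (Rle_abs A); lra]).
  assert (p * Rabs (y * L - x) <= p * L) by (apply Rmult_le_compat_l; lra).
  nra.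
Qed.

Lemma probe_word_normal : normal probe_word.
Proof.
  intros l u Hl Hlen. subst l.
  apply (Un_cv_block_ratio (count_range (block_matches probe_word u) 0)); [lia | |].
  - apply Rlt_le, Rinv_0_lt_compat, pow_lt. lra.
  - apply block_count_sublinear. lia.
Qed.

Theorem theorem9 :
  exists x : word, normal x /\ (forall k : nat, x k = even_word x k).
Proof. exists probe_word. split; [exact probe_word_normal | exact probe_word_even]. Qed.
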